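(* Let $G$ be an infinite compact metrizable abelian group with normalized Haar measure $m$, and let $\rho$ be an admissible (semi)metric on $(G,m)$ invariant under all translations. Then there exists a sequence $(g_n)$ of elements of $G$ that converges to $0$ both in the group topology of $G$ and with respect to $\rho$ (i.e. $\rho(0,g_n)\to 0$).
   Context: A measurable $\rho:G\times G\to\mathbb R_+$ is an admissible (semi)metric if (1) it is a semimetric (resp. metric) in the usual sense on a set of full measure and $\int\int\rho\,dm\,dm<\infty$, and (2) the completion of $(G,\rho)$, or of the quotient of $G$ by the partition into classes $\{y:\rho(x,y)=0\}$ in the semimetric case, is a Polish space on which $m$ (resp. the quotient measure) is a Borel probability measure (the Borel $\sigma$-algebra being dense mod $0$ in the measurable $\sigma$-algebra). Invariance means $\rho(x+h,y+h)=\rho(x,y)$ for all $h$. *)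

From HB Require Import structures.
From mathcomp Require Import all_boot all_order all_algebra.
From mathcomp Require Import all_classical all_reals all_analysis.
Set Implicit Arguments. Unset Strict Implicit. Unset Printing Implicit Defensive.
Import Order.TTheory GRing.Theory Num.Theory.
Local Open Scope classical_set_scope.
Local Open Scope ring_scope.

Definition metrizable (R : realType) (T : topologicalType) : Prop :=
  exists d : T -> T -> R,
    [/\ (forall x y, 0 <= d x y),
        (forall x y, d x y = 0 <-> x = y),
        (forall x y, d x y = d y x),
        (forall x y z, d x z <= d x y + d y z) &
        (forall (x : T) (A : set T),
            nbhs x A <-> exists2 e : R, 0 < e & [set y | d x y < e] `<=` A)].

Definition zpointed (G : topologicalZmodType) : Type := G.
HB.instance Definition _ (G : topologicalZmodType) := Choice.on (zpointed G).
HB.instance Definition _ (G : topologicalZmodType) :=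
  isPointed.Build (zpointed G) (0 : G).
Notation borel G := (g_sigma_algebraType (@open G : set (set (zpointed G)))).

Definition semimetric_on {T : Type} {R : realType} (X : set T) (rho : T -> T -> R) :=
  forall x y z, X x -> X y -> X z ->
    [/\ rho x x = 0, rho x y = rho y x & rho x z <= rho x y + rho y z].

Definition rho_balls {T : Type} {R : realType} (X : set T) (rho : T -> T -> R)
  : set (set T) :=
  [set B | exists x r, [/\ X x, 0 < r & B = X `&` [set y | rho x y < r]]].

(* Admissible semimetric on the probability space (T, m):
   (1) nonnegative measurable function, semimetric on a set X of full measure,
       with finite double integral;
   (2) the quotient of (X, rho) by {rho = 0} is separable (equivalently its
       completion is Polish); the quotient map is then Borel and m induces a
       Borel probability measure on it; and the (pulled back) Borel
       sigma-algebra of rho is dense mod 0 in the measurable sigma-algebra. *)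
Definition admissible_semimetric {d} {T : measurableType d} {R : realType}
  (m : probability T R) (rho : T -> T -> R) : Prop :=
  [/\ (forall x y, 0 <= rho x y),
      measurable_fun [set: T * T] (fun p : T * T => rho p.1 p.2),
      (\int[m]_x \int[m]_y (rho x y)%:E < +oo)%E &
      exists X : set T,
        [/\ measurable X, m X = 1%E, semimetric_on X rho,
            (exists D : set T, [/\ countable D, D `<=` X &
               forall x, X x -> forall e : R, 0 < e ->
                 exists2 z, D z & rho x z < e]) &
            (forall A : set T, measurable A ->
               exists2 B, <<s rho_balls X rho >> B &
                 m ((A `\` B) `|` (B `\` A)) = 0%E)]].

From HB Require Import structures.
From mathcomp Require Import all_boot all_order all_algebra.
From mathcomp Require Import all_classical all_reals all_analysis.
From mathcomp Require Import finmap.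

Set Implicit Arguments.
Unset Strict Implicit.
Unset Printing Implicit Defensive.

Import Order.TTheory GRing.Theory Num.Theory numFieldNormedType.Exports.
Local Open Scope classical_set_scope.
Local Open Scope ring_scope.

(* Fix [e > 0] and a neighbourhood [N] of [0]. The [rho]-balls of radius [e/2]
   centred at a countable [rho]-dense set cover a set of full measure, so one
   of them, [B], is not null. If no [h] in [N] other than [0] had
   [rho 0 h < e], then by invariance [y - x] would lie outside [N] for any two
   distinct points [x], [y] of [B]; covering the compact group by finitely many
   translates of a neighbourhood [V] with [V - V] inside [N] shows that [B] is
   finite, hence null, because a translation-invariant probability on an
   infinite group has no atoms. Letting [N] run through a countable
   neighbourhood base of [0] with [e = 1/(n+1)] yields the sequence. *)

Lemma sume_cst (R : numDomainType) (I : Type) (s : seq I) (c : \bar R) :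
  (\sum_(i <- s) c = c *+ size s)%E.
Proof. by rewrite big_const_seq count_predT iter_addr addr0. Qed.

Lemma probability_set1_eq0 d (T : measurableType d) (R : realType)
    (P : probability T R) :
  infinite_set [set: T] -> (forall x : T, measurable [set x]) ->
  (forall x y : T, P [set x] = P [set y]) -> forall x : T, P [set x] = 0%E.
Proof.
move=> infT m1 Peq x; have Pc y : P [set y] = P [set x] := Peq y x.
have Pfset (B : {fset T}) : (P [set x] *+ #|` B| <= 1)%E.
  rewrite -sume_cst -(eq_bigr _ (fun y _ => Pc y)) -measure_fbigsetU //.
  - by apply: probability_le1; apply: bigsetU_measurable.
  - by move=> y z _ _ [t [/= -> ->]].
have Px_ge0 : (0 <= P [set x])%E by [].
have Px_le1 : (P [set x] <= 1)%E by exact: probability_le1.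
move: Px_ge0 Px_le1 Pfset {Pc Peq}.
case: (P [set x]) => //= r; rewrite !lee_fin => r_ge0 _ Pfset.
apply/eqP; rewrite eqe eq_le r_ge0 andbT leNgt; apply/negP => r_gt0.
pose k := (Num.truncn r^-1).+1.
have [B _ kB] := infinite_set_fset k infT.
have := Pfset B; rewrite -EFin_natmul lee_fin -mulr_natr => Br_le1.
have kr_gt1 : 1 < r * k%:R.
  rewrite -[X in X < _](mulfV (lt0r_neq0 r_gt0)) ltr_pM2l //.
  exact: truncnS_gt.
have krB : r * k%:R <= r * #|` B|%:R by rewrite ler_pM2l // ler_nat.
by have := le_trans krB Br_le1; rewrite leNgt kr_gt1.
Qed.

Lemma negligible_countable_bigcup d (T : measurableType d) (R : realType)
    (mu : {measure set T -> \bar R}) (I : Type) (D : set I) (F : I -> set T) :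
  countable D -> (forall i, D i -> mu.-negligible (F i)) ->
  mu.-negligible (\bigcup_(i in D) F i).
Proof.
move=> /pfcard_geP[->|[f]] FN.
  by rewrite bigcup_set0; exact: negligible_set0.
apply: (negligibleS _ (negligible_bigcup (fun n => FN (f n) (funS n Logic.I)))).
move=> x [i Di Fix]; have [n _ fni] := 'surj_f Di.
by exists n => //; rewrite fni.
Qed.

Lemma negligible_finite_set d (T : measurableType d) (R : realType)
    (mu : {measure set T -> \bar R}) (A : set T) :
  (forall x, mu.-negligible [set x]) -> finite_set A -> mu.-negligible A.
Proof.
move=> N1 /finite_set_countable cA.
apply: (negligibleS (A := \bigcup_(x in A) [set x])).
  by move=> x Ax; exists x.
exact: negligible_countable_bigcup.
Qed.

Lemma semimetric_ball_not_negligible d (T : measurableType d) (R : realType)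
    (mu : {measure set T -> \bar R}) (X D : set T) (rho : T -> T -> R) (e : R) :
  ~ mu.-negligible X -> semimetric_on X rho -> countable D -> D `<=` X ->
  (forall x, X x -> exists2 z, D z & rho x z < e) ->
  exists2 z, X z & ~ mu.-negligible (X `&` [set y | rho z y < e]).
Proof.
move=> XN rho_sm cD DX D_dense; apply: contrapT => balls_negligible; apply: XN.
apply: (negligibleS (A := \bigcup_(z in D) (X `&` [set y | rho z y < e]))).
  move=> x Xx; have [z Dz rxz] := D_dense x Xx; exists z => //; split => //=.
  by have [_ <- _] := rho_sm x z z Xx (DX _ Dz) (DX _ Dz).
apply: negligible_countable_bigcup cD _ => z Dz.
by apply: contrapT => zN; apply: balls_negligible; exists z => //; exact: DX.
Qed.

Lemma metrizable_open_setC1 (R : realType) (T : topologicalType) (x : T) :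
  metrizable R T -> open (~` [set x]).
Proof.
move=> [d [d_ge0 d_eq0 _ _ d_nbhs]]; rewrite openE => y /= yx.
apply/d_nbhs; exists (d y x); last by move=> z /= dz zx; rewrite zx ltxx in dz.
by rewrite lt_neqAle d_ge0 andbT eq_sym; apply/eqP => /d_eq0.
Qed.

Lemma metrizable_cvg_seq (R : realType) (T : topologicalType) (x : T)
    (P : nat -> T -> Prop) :
  metrizable R T -> (forall n A, nbhs x A -> exists2 y, A y & P n y) ->
  exists g : nat -> T, g @ \oo --> x /\ forall n, P n (g n).
Proof.
move=> [d [_ _ _ _ d_nbhs]] PA.
have small_P n : exists y, d x y < n.+1%:R^-1 /\ P n y.
  have ball_nbhs : nbhs x [set y | d x y < n.+1%:R^-1].
    by apply/d_nbhs; exists n.+1%:R^-1.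
  by have [y] := PA n _ ball_nbhs; exists y.
have [g gP] := choice small_P.
exists g; split=> [A /d_nbhs[e e_gt0 eA]|n]; last by case: (gP n).
apply: filterS (near_infty_natSinv_lt (PosNum e_gt0)) => n /= n_lt.
by apply: eA; rewrite /= (lt_trans (gP n).1).
Qed.

(* [compact_cover] needs a pointed space; [zpointed G] is [G] pointed by [0]. *)
HB.instance Definition _ (G : topologicalZmodType) :=
  Topological.copy (zpointed G) G.

Lemma nbhs0_open_subr (G : topologicalZmodType) (N : set G) : nbhs 0 N ->
  exists2 V : set G, open_nbhs 0 V & forall a b, V a -> V b -> N (b - a).
Proof.
move=> N0; have := @sub_continuous G (0, 0) N; rewrite /= subr0 => /(_ N0).
case=> -[A B] /= [nA nB] sAB.
have : nbhs (0 : G) (A `&` B) by apply: filterI.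
rewrite nbhsE => -[V V0 VAB]; exists V => // a b Va Vb.
by apply: (sAB (b, a)); split; [exact: (VAB _ Vb).1|exact: (VAB _ Va).2].
Qed.

Lemma compact_translates_cover (G : topologicalZmodType) (V : set G) :
  compact [set: G] -> open_nbhs 0 V ->
  exists D : {fset G}, forall y, exists2 x, x \in D & V (y - x).
Proof.
move=> cG [oV V0].
have oVx x : open [set y : G | V (y - x)].
  apply: open_comp oV => y _.
  apply: (@continuous_comp _ _ _ (fun y => (y, x))
                            (fun p : G * G => p.1 - p.2)).
    by apply: cvg_pair; [exact: cvg_id|exact: cvg_cst].
  exact: sub_continuous.
have : cover_compact [set: zpointed G] by rewrite -compact_cover.
move=> /(_ G setT (fun x => [set y | V (y - x)])) [].
- by move=> x _; exact: oVx.
- by move=> y _; exists y => //=; rewrite subrr.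
by move=> D _ cov; exists D => y; have [x xD Vx] := cov y I; exists x.
Qed.

Lemma compact_separated_finite (G : topologicalZmodType) (N B : set G) :
  compact [set: G] -> nbhs 0 N ->
  (forall x y, B x -> B y -> N (y - x) -> x = y) -> finite_set B.
Proof.
move=> cG N0 Bsep.
have [V V0 VN] := nbhs0_open_subr N0.
have [D cov] := compact_translates_cover cG V0.
pose S x := [set y | B y /\ V (y - x)].
apply: (@sub_finite_set _ _ (\bigcup_(x in [set` D]) S x)).
  by move=> y By; have [x xD Vyx] := cov y; exists x.
apply: bigcup_finite => // x _.
have [->|/set0P[y0 [By0 Vy0]]] := eqVneq (S x) set0; first exact: finite_set0.
apply: (sub_finite_set _ (finite_set1 y0)) => y [By Vy] /=.
apply/esym/(Bsep y0 y) => //; have := VN _ _ Vy0 Vy.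
by rewrite opprB addrA subrK.
Qed.

Lemma borel_measurable_set1 (R : realType) (G : topologicalZmodType) (x : G) :
  metrizable R G -> measurable ([set x] : set (borel G)).
Proof.
move=> mG; rewrite -[X in measurable X]setCK; apply: measurableC.
by apply: sub_sigma_algebra; exact: metrizable_open_setC1 mG.
Qed.

Lemma haar_set1_eq0 (R : realType) (G : topologicalZmodType)
    (m : probability (borel G) R) :
  metrizable R G -> ~ finite_set [set: G] ->
  (forall (h : G) (A : set (borel G)), measurable A ->
     m [set x | A (x + h)] = m A) ->
  forall x : G, m ([set x] : set (borel G)) = 0%E.
Proof.
move=> mG infG m_inv.
apply: (probability_set1_eq0 (P := m)) => // [x|x y].
  exact: borel_measurable_set1 mG.
rewrite -(m_inv (y - x) _ (borel_measurable_set1 y mG)); congr (m _).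
apply/seteqP; split => z /= => [->|zyx]; first by rewrite addrC subrK.
by rewrite -(addrK (y - x) z) zyx opprB addrC subrK.
Qed.

Section invariant_admissible_semimetric.
Variables (R : realType) (G : topologicalZmodType).
Variables (m : probability (borel G) R) (rho : G -> G -> R).
Hypotheses (cG : compact [set: G]) (mG : metrizable R G).
Hypothesis infG : ~ finite_set [set: G].
Hypothesis m_inv : forall (h : G) (A : set (borel G)), measurable A ->
  m [set x | A (x + h)] = m A.
Hypothesis rho_adm : admissible_semimetric m rho.
Hypothesis rho_inv : forall x y h : G, rho (x + h) (y + h) = rho x y.

Lemma exists_small_rho_nbhs0 (e : R) (N : set G) : 0 < e -> nbhs 0 N ->
  exists2 h, N h & h != 0 /\ rho 0 h < e.
Proof.
move=> e_gt0 N0; apply: contrapT => no_small_h.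
have [_ _ _ [X [mX mX1 rho_sm [D [cD DX D_dense]] _]]] := rho_adm.
have XN : ~ m.-negligible X.
  move/(negligibleP _ mX) => mX0.
  by move: mX1; rewrite mX0 => /eqP; rewrite eq_sym onee_eq0.
have e2_gt0 : 0 < e / 2 by rewrite divr_gt0.
have [z Xz] := semimetric_ball_not_negligible XN rho_sm cD DX
  (fun x Xx => D_dense x Xx _ e2_gt0).
apply; apply: negligible_finite_set.
  move=> x; exists [set x]; split => //.
  - exact: borel_measurable_set1 mG.
  - exact: haar_set1_eq0.
apply: compact_separated_finite cG N0 _ => x y [Xx rzx] [Xy rzy] Nyx.
apply: contrapT => /eqP xy; apply: no_small_h; exists (y - x) => //.
split; first by rewrite subr_eq0 eq_sym.
have -> : rho 0 (y - x) = rho x y.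
  by rewrite -(rho_inv 0 (y - x) x) add0r subrK.
have [_ rxz_sym rxzy] := rho_sm x z y Xx Xz Xy.
by apply: le_lt_trans rxzy _; rewrite rxz_sym [e]splitr ltrD.
Qed.

End invariant_admissible_semimetric.

Theorem corollary1 (R : realType) (G : topologicalZmodType)
  (m : probability (borel G) R) (rho : G -> G -> R) :
  compact [set: G] ->
  metrizable R G ->
  ~ finite_set [set: G] ->
  (* m is the normalized Haar measure: a translation-invariant Borel
     probability measure *)
  (forall (h : G) (A : set (borel G)), measurable A ->
     m [set x | A (x + h)] = m A) ->
  admissible_semimetric m rho ->
  (forall x y h : G, rho (x + h) (y + h) = rho x y) ->
  exists g : nat -> G,
    [/\ (forall n, g n != 0),
        g @ \oo --> (0 : G) &
        (fun n => rho 0 (g n)) @ \oo --> (0 : R)].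
Proof.
move=> cG mG infG m_inv rho_adm rho_inv.
have small_h n A : nbhs 0 A -> exists2 h, A h & h != 0 /\ rho 0 h < n.+1%:R^-1.
  exact: exists_small_rho_nbhs0 cG mG infG m_inv rho_adm rho_inv _ _ _.
have [g [g_cvg gP]] := metrizable_cvg_seq mG small_h.
exists g; split=> // [n|]; first by case: (gP n).
have [rho_ge0 _ _ _] := rho_adm.
apply/cvgrPdist_lt => e e_gt0.
apply: filterS (near_infty_natSinv_lt (PosNum e_gt0)) => n /= n_lt.
by rewrite sub0r normrN ger0_norm // (lt_trans (gP n).2).
Qed.
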